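(* Every factor-critical vertex-stable equimatchable graph is a complete graph on an odd number of vertices.
   Context: All graphs are finite and simple. A graph is equimatchable if all its maximal matchings have the same cardinality. A graph $G$ is vertex-stable equimatchable if $G$ is equimatchable and $G-v$ is equimatchable for every $v\in V(G)$. A graph $G$ is factor-critical if $G-v$ has a perfect matching for every $v\in V(G)$. *)

From mathcomp Require Import all_boot.
Set Implicit Arguments. Unset Strict Implicit. Unset Printing Implicit Defensive.

(* Subgraphs induced on a vertex set V : {set T}
   are used to express vertex deletion G - v (induced on V :\ v). *)

Section Graphs.
Variable T : finType.

Definition simple_graph (e : rel T) : Prop := symmetric e /\ irreflexive e.

Definition is_edge (e : rel T) (V : {set T}) (E : {set T}) : Prop :=
  exists x y, [/\ x \in V, y \in V, e x y & E = [set x; y]].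

Definition matching (e : rel T) (V : {set T}) (M : {set {set T}}) : Prop :=
  (forall E, E \in M -> is_edge e V E) /\
  (forall E F, E \in M -> F \in M -> E != F -> [disjoint E & F]).

Definition maximal_matching (e : rel T) (V : {set T}) (M : {set {set T}}) : Prop :=
  matching e V M /\ (forall M', matching e V M' -> M \subset M' -> M' = M).

Definition equimatchable (e : rel T) (V : {set T}) : Prop :=
  forall M1 M2, maximal_matching e V M1 -> maximal_matching e V M2 ->
    #|M1| = #|M2|.

Definition perfect_matching (e : rel T) (V : {set T}) (M : {set {set T}}) : Prop :=
  matching e V M /\ (forall x, x \in V -> exists2 E, E \in M & x \in E).

Definition vertex_stable_equimatchable (e : rel T) (V : {set T}) : Prop :=
  equimatchable e V /\ (forall v, v \in V -> equimatchable e (V :\ v)).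

Definition factor_critical (e : rel T) (V : {set T}) : Prop :=
  forall v, v \in V -> exists M, perfect_matching e (V :\ v) M.

Definition complete_on (e : rel T) (V : {set T}) : Prop :=
  forall x y, x \in V -> y \in V -> x != y -> e x y.

End Graphs.

(** If [x] and [y] were non-adjacent, take a perfect matching [N] of [G - x]
    and its edge [{y, u}].  Removing that edge leaves a matching of [G - u]
    that misses only [x] and [y]; as these are non-adjacent it is maximal, yet
    it is one edge smaller than a perfect matching of [G - u], contradicting
    the equimatchability of [G - u].  Oddness is immediate from a perfect
    matching of [G - v]. *)

From mathcomp Require Import all_boot.
From mathcomp Require Import zify.

Set Implicit Arguments.
Unset Strict Implicit.
Unset Printing Implicit Defensive.

Section Matchings.
Variable T : finType.
Variable e : rel T.
Hypothesis esym : symmetric e.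
Hypothesis eirr : irreflexive e.

Lemma is_edge_subset (V V' E : {set T}) :
  V \subset V' -> is_edge e V E -> is_edge e V' E.
Proof.
move=> sVV' [a [b [aV bV eab ->]]].
by exists a, b; split; rewrite ?(subsetP sVV').
Qed.

Lemma matching_subset (V V' : {set T}) (M : {set {set T}}) :
  V \subset V' -> matching e V M -> matching e V' M.
Proof. by move=> sVV' [Me Md]; split=> // E /Me; apply: is_edge_subset. Qed.

Lemma is_edge_other (V E : {set T}) (y : T) :
  is_edge e V E -> y \in E ->
  exists u, [/\ E = [set y; u], e y u & u \in V].
Proof.
move=> [a [b [aV bV eab ->]]]; rewrite !inE => /orP[/eqP->|/eqP->].
  by exists b.
by exists a; rewrite setUC esym.
Qed.

Lemma perfect_matching_card (V : {set T}) (M : {set {set T}}) :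
  perfect_matching e V M -> #|V| = 2 * #|M|.
Proof.
move=> [[Me Md] Mc]; rewrite mulnC; apply: card_uniform_partition.
  move=> E /Me [a [b [_ _ eab ->]]]; rewrite cards2.
  by case: eqP eab => [->|]; rewrite ?eirr.
apply/and3P; split.
- rewrite eqEsubset; apply/andP; split.
    apply/subsetP => z /bigcupP [E /Me [a [b [aV bV _ ->]]]].
    by rewrite !inE => /orP[/eqP->|/eqP->].
  by apply/subsetP => z /Mc [E EM zE]; apply/bigcupP; exists E.
- by apply/trivIsetP => A B AM BM; apply: Md.
- by apply/negP => /Me [a [b [_ _ _ /setP/(_ a)]]]; rewrite !inE eqxx.
Qed.

Lemma perfect_matching_setD (V E : {set T}) (M : {set {set T}}) :
  perfect_matching e V M -> E \in M ->
  perfect_matching e (V :\: E) (M :\ E).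
Proof.
move=> [[Me Md] Mc] EM; split; last first.
  move=> z /setDP [zV zE]; have [F FM zF] := Mc z zV.
  by exists F => //; rewrite !inE FM andbT; apply: contraNneq zE => <-.
split=> [F|F G]; last by rewrite !inE => /andP[_ FM] /andP[_ GM]; apply: Md.
rewrite !inE => /andP[FE FM]; have [a [b [aV bV eab defF]]] := Me F FM.
have notE z : z \in F -> z \in V :\: E.
  by move=> zF; rewrite inE (disjointFr (Md F E FM EM FE) zF) /=; move: zF;
    rewrite defF !inE => /orP[]/eqP->.
by exists a, b; split; rewrite ?notE // defF !inE eqxx ?orbT.
Qed.

Lemma maximal_matching_of_cover (V : {set T}) (M : {set {set T}}) :
  matching e V M ->
  (forall a b, a \in V -> b \in V -> e a b ->
     (exists2 F, F \in M & a \in F) \/ (exists2 F, F \in M & b \in F)) ->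
  maximal_matching e V M.
Proof.
move=> Mm Mcov; split=> // M' [M'e M'd] sMM'.
apply/eqP; rewrite eqEsubset sMM' andbT; apply/subsetP => E EM'.
apply: contraT => EnM; exfalso.
have [a [b [aV bV eab defE]]] := M'e E EM'.
have uncovered z F : z \in E -> F \in M -> z \in F -> False.
  move=> zE FM zF; have FE : E != F by apply: contraNneq EnM => ->.
  by have := disjointFr (M'd E F EM' (subsetP sMM' F FM) FE) zE; rewrite zF.
have [[F FM aF]|[F FM bF]] := Mcov a b aV bV eab.
  by apply: (uncovered a F) => //; rewrite defE !inE eqxx.
by apply: (uncovered b F) => //; rewrite defE !inE eqxx orbT.
Qed.

Lemma perfect_matching_maximal_in (V W : {set T}) (M : {set {set T}}) :
  W \subset V -> perfect_matching e W M ->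
  {in V :\: W &, forall a b, ~~ e a b} ->
  maximal_matching e V M.
Proof.
move=> sWV [Mm Mc] indep; apply: maximal_matching_of_cover.
  exact: matching_subset Mm.
move=> a b aV bV eab.
have [aW|aW] := boolP (a \in W); first by left; apply: Mc.
have [bW|bW] := boolP (b \in W); first by right; apply: Mc.
by move: eab; rewrite (negbTE (indep a b _ _)) // inE ?aW ?bW.
Qed.

Lemma factor_critical_odd (V : {set T}) :
  V != set0 -> factor_critical e V -> odd #|V|.
Proof.
case/set0Pn => v vV /(_ v vV) [M /perfect_matching_card].
by rewrite (cardsD1 v V) vV add1n => ->; rewrite /= mul2n odd_double.
Qed.

Lemma factor_critical_equimatchable_complete (V : {set T}) :
  factor_critical e V -> {in V, forall u, equimatchable e (V :\ u)} ->
  complete_on e V.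
Proof.
move=> fc eqm x y xV yV xy; apply: contraT => nexy.
have [N NP] := fc x xV; have [[Ne _] Nc] := NP.
have yVx : y \in V :\ x by rewrite !inE eq_sym xy.
have [E EN yE] := Nc y yVx.
have [u [defE eyu]] := is_edge_other (Ne E EN) yE.
rewrite !inE => /andP[_ uV].
have [P PP] := fc u uV.
have sWVu : (V :\ x) :\: E \subset V :\ u.
  apply/subsetP => z; rewrite !inE defE !inE negb_or.
  by case/andP=> /andP[_ ->] /andP[_ ->].
have xy_only z : z \in (V :\ u) :\: ((V :\ x) :\: E) -> (z == x) || (z == y).
  by rewrite !inE defE !inE; case: (z == x); case: (z == y); case: (z == u);
    rewrite /= ?andNb.
have Mmax : maximal_matching e (V :\ u) (N :\ E).
  apply: perfect_matching_maximal_in sWVu (perfect_matching_setD NP EN) _.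
  move=> a b /xy_only /orP[]/eqP-> /xy_only /orP[]/eqP->;
    by rewrite ?eirr // esym.
have Pmax : maximal_matching e (V :\ u) P.
  apply: perfect_matching_maximal_in (subxx _) PP _ => a b.
  by rewrite setDv inE.
have := eqm u uV _ _ Mmax Pmax.
have := perfect_matching_card NP; have := perfect_matching_card PP.
have := cardsD1 E N; have := cardsD1 x V; have := cardsD1 u V.
rewrite EN xV uV; lia.
Qed.

End Matchings.

Theorem lemma7p3 (T : finType) (e : rel T) :
  simple_graph e -> 0 < #|T| ->
  factor_critical e [set: T] ->
  vertex_stable_equimatchable e [set: T] ->
  complete_on e [set: T] /\ odd #|T|.
Proof.
move=> [esym eirr] T_gt0 fc [_ eqm]; split.
  exact: factor_critical_equimatchable_complete.
rewrite -cardsT; apply: factor_critical_odd => //.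
by rewrite -card_gt0 cardsT.
Qed.
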